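(* In the root system $B_n$, every quartet $\{r_1, r, s, s_1\}$ is a mono-quartet, i.e. the vectors $s - r_1$ and $r - r_1$ are never both roots.
   Context: Fix simple roots of $B_n$; the height of a root is the sum of its coefficients in the simple roots. The regular ordering $\prec$ of positive roots orders them by height, and roots of equal height lexicographically by coefficient vectors. An ordered pair $\{r,s\}$ of positive roots is special if $r+s\in\varPhi$ and $0\prec r\prec s$; a special pair $\{r_1,s_1\}$ is extraspecial if $r_1 \preceq r$ for every special pair $\{r,s\}$ with $r+s=r_1+s_1$. A quartet is an ordered set $\{r_1,r,s,s_1\}$ where $\{r_1,s_1\}$ is extraspecial, $\{r,s\}$ is a special, non-extraspecial pair with $r+s=r_1+s_1$, and $0\prec r_1\prec r\prec s\prec s_1$. *)

From mathcomp Require Import all_boot all_order all_algebra.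
Set Implicit Arguments. Unset Strict Implicit. Unset Printing Implicit Defensive.
Import Order.TTheory GRing.Theory Num.Theory.
Local Open Scope ring_scope.

(* Root system B_n realized in Z^n (standard basis e_0,...,e_{n-1}):
   roots are +-e_i and +-e_i +- e_j (i <> j), i.e. nonzero vectors with
   entries in {-1,0,1} and at most two nonzero entries.
   Simple roots: a_k = e_k - e_{k+1} (k < n-1) and a_{n-1} = e_{n-1}.
   The coefficient of a_k in v is v_0 + ... + v_k. *)

Definition vec (n : nat) := {ffun 'I_n -> int}.

Definition is_root n (v : vec n) : bool :=
  [&& [exists i, v i != 0],
      [forall i, (v i == 0) || (v i == 1) || (v i == -1)] &
      (#|[set i | v i != 0]| <= 2)%N].

Definition coef n (v : vec n) : vec n :=
  [ffun k : 'I_n => \sum_(j < n | (j <= k)%N) v j].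

Definition height n (v : vec n) : int := \sum_(k < n) coef v k.

Definition positive n (v : vec n) : bool :=
  is_root v && [forall k, 0 <= coef v k].

Definition lexlt n (c d : vec n) : Prop :=
  exists k : 'I_n, (forall j : 'I_n, (j < k)%N -> c j = d j) /\ c k < d k.

Definition prec n (r s : vec n) : Prop :=
  height r < height s \/ (height r = height s /\ lexlt (coef r) (coef s)).

Definition preceq n (r s : vec n) : Prop := r = s \/ prec r s.

Definition special n (r s : vec n) : Prop :=
  positive r /\ positive s /\ is_root (r + s) /\ prec r s.

Definition extraspecial n (r1 s1 : vec n) : Prop :=
  special r1 s1 /\
  forall r s : vec n, special r s -> r + s = r1 + s1 -> preceq r1 r.

Definition quartet n (r1 r s s1 : vec n) : Prop :=
  [/\ extraspecial r1 s1, special r s, ~ extraspecial r s,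
      r + s = r1 + s1 & [/\ prec r1 r, prec r s & prec s s1]].

Definition mono_quartet n (r1 r s s1 : vec n) : Prop :=
  ~ (is_root (s - r1) /\ is_root (r - r1)).

From mathcomp Require Import all_boot all_order all_algebra.
From mathcomp Require Import zify.
Set Implicit Arguments. Unset Strict Implicit. Unset Printing Implicit Defensive.
Import GRing.Theory.
Local Open Scope ring_scope.

(* Every root of B_n has squared length 1 or 2.  If r - r1 and s - r1 were
   roots, then r1, r, s, r + s, r - r1, s - r1 and s1 = r + s - r1 would be
   seven roots; writing their squared lengths in terms of the (integer) Gram
   matrix of r1, r, s yields a system of constraints with no solution. *)

Definition dotv n (u v : vec n) : int := \sum_i u i * v i.

Lemma dotvC n (u v : vec n) : dotv u v = dotv v u.
Proof. by apply: eq_bigr => i _; rewrite mulrC. Qed.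

Lemma dotvDl n (u v w : vec n) : dotv (u + v) w = dotv u w + dotv v w.
Proof. by rewrite /dotv -big_split; apply: eq_bigr => i _; rewrite ffunE mulrDl. Qed.

Lemma dotvNl n (u v : vec n) : dotv (- u) v = - dotv u v.
Proof. by rewrite /dotv -sumrN; apply: eq_bigr => i _; rewrite ffunE mulNr. Qed.

Lemma dotvDr n (u v w : vec n) : dotv u (v + w) = dotv u v + dotv u w.
Proof. by rewrite dotvC dotvDl !(dotvC _ u). Qed.

Lemma dotvNr n (u v : vec n) : dotv u (- v) = - dotv u v.
Proof. by rewrite dotvC dotvNl dotvC. Qed.

Lemma dotvv_root n (v : vec n) : is_root v -> dotv v v = 1 \/ dotv v v = 2.
Proof.
case/and3P=> /existsP [i0 vi0] /forallP v_unit supp_le2.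
have -> : dotv v v = #|[set i | v i != 0]|%:R.
  rewrite /dotv -sumr_const [RHS]big_mkcond; apply: eq_bigr => i _.
  by rewrite inE; case/orP: (v_unit i) => [/orP [] | ] /eqP ->.
have : (0 < #|[set i | v i != 0]|)%N by apply/card_gt0P; exists i0; rewrite inE.
by move: supp_le2; case: #|_| => [|[|[|k]]] //= _ _; [left | right].
Qed.

Lemma not_root_add_subr n (u v w : vec n) :
  is_root u -> is_root v -> is_root w -> is_root (v + w) ->
  is_root (v - u) -> is_root (w - u) -> ~~ is_root (v + w - u).
Proof.
move=> /dotvv_root Nu /dotvv_root Nv /dotvv_root Nw /dotvv_root Nvw.
move=> /dotvv_root Nvu /dotvv_root Nwu; apply/negP => /dotvv_root Nvwu.
move: Nu Nv Nw Nvw Nvu Nwu Nvwu.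
rewrite !(dotvDl, dotvDr, dotvNl, dotvNr) (dotvC v u) (dotvC w u) (dotvC w v).
lia.
Qed.

Theorem mainTheorem3 (n : nat) (hn : (2 <= n)%N) (r1 r s s1 : vec n) :
  quartet r1 r s s1 -> mono_quartet r1 r s s1.
Proof.
case=> [[[/andP [root_r1 _] [/andP [root_s1 _] _]] _]
        [/andP [root_r _] [/andP [root_s _] [root_rs _]]] _ rs_eq _].
have s1E : s1 = r + s - r1 by rewrite rs_eq addrC addKr.
case=> root_sr1 root_rr1.
have := not_root_add_subr root_r1 root_r root_s root_rs root_rr1 root_sr1.
by rewrite -s1E root_s1.
Qed.
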